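(* Let $\Gamma=A\ast B$ with $A,B$ non-trivial, let $f=f_A\ast f_B$ be a split quasimorphism and $\widehat f$ its homogenization. Then $\mathrm{def}\,\widehat f\geq 2\max\{\mathrm{def}\, f_A,\mathrm{def}\, f_B\}$.
   Context: A quasimorphism is a map $f:\Gamma\to\mathbb{R}$ with $\mathrm{def}\, f=\sup_{g,h}|f(gh)-f(g)-f(h)|<\infty$; it is alternating if $f(g^{-1})=-f(g)$. Its homogenization is $\widehat f(g)=\lim_{n\to\infty}f(g^n)/n$. Each $1\neq g\in A\ast B$ has a unique normal form $g=a_1b_1\cdots a_nb_n$ ($a_i\in A$, $b_i\in B$, all non-trivial except possibly $a_1$ or $b_n$). For alternating quasimorphisms $f_A:A\to\mathbb{R}$, $f_B:B\to\mathbb{R}$, the split quasimorphism is $f(1)=0$ and $f(a_1b_1\cdots a_nb_n)=f_A(a_1)+f_B(b_1)+\dots+f_A(a_n)+f_B(b_n)$. *)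

From Stdlib Require Import Reals List.
From Coquelicot Require Import Coquelicot.
Open Scope R_scope.

Record Group := {
  carrier :> Type;
  gmul : carrier -> carrier -> carrier;
  gone : carrier;
  ginv : carrier -> carrier;
  gmulA : forall x y z, gmul x (gmul y z) = gmul (gmul x y) z;
  gmul1x : forall x, gmul gone x = x;
  gmulx1 : forall x, gmul x gone = x;
  gmulVx : forall x, gmul (ginv x) x = gone;
  gmulxV : forall x, gmul x (ginv x) = gone
}.
Arguments gmul {g} _ _.
Arguments gone {g}.
Arguments ginv {g} _.

Fixpoint gpow {G : Group} (g : G) (n : nat) : G :=
  match n with O => gone | S m => gmul g (gpow g m) end.

Definition is_hom {G H : Group} (phi : G -> H) : Prop :=
  forall x y, phi (gmul x y) = gmul (phi x) (phi y).

Definition defect {G : Group} (f : G -> R) : Rbar :=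
  Lub_Rbar (fun r => exists g h : G, r = Rabs (f (gmul g h) - f g - f h)).

Definition quasimorphism {G : Group} (f : G -> R) : Prop :=
  exists C : R, forall g h : G, Rabs (f (gmul g h) - f g - f h) <= C.

Definition alternating {G : Group} (f : G -> R) : Prop :=
  forall g : G, f (ginv g) = - f g.

Definition homogenization {G : Group} (f : G -> R) : G -> R :=
  fun g => real (Lim_seq (fun n => f (gpow g n) / INR n)).

Section FreeProduct.
Context {A B G : Group} (iA : A -> G) (iB : B -> G).

Definition letter_nontriv (x : A + B) : Prop :=
  match x with inl a => a <> gone | inr b => b <> gone end.

Definition other_factor (x y : A + B) : Prop :=
  match x, y with inl _, inr _ => True | inr _, inl _ => True | _, _ => False end.

(* reduced word: non-trivial letters, alternating between A and B.
   These are exactly the normal forms a1 b1 ... an bn (a1 or bn possibly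
   trivial, i.e. omitted). *)
Fixpoint reduced (w : list (A + B)) : Prop :=
  match w with
  | nil => True
  | x :: w' => letter_nontriv x /\
      (match w' with nil => True | y :: _ => other_factor x y end) /\ reduced w'
  end.

Definition letter_img (x : A + B) : G :=
  match x with inl a => iA a | inr b => iB b end.

Definition eval_word (w : list (A + B)) : G :=
  fold_right (fun x acc => gmul (letter_img x) acc) gone w.

Definition is_free_product : Prop :=
  is_hom iA /\ is_hom iB /\
  forall g : G, exists! w : list (A + B), reduced w /\ eval_word w = g.

(* f is the split quasimorphism f_A * f_B: f(1)=0 and
   f(a1 b1 ... an bn) = fA a1 + fB b1 + ... + fA an + fB bn. *)
Definition is_split_qm (fA : A -> R) (fB : B -> R) (f : G -> R) : Prop :=
  forall w, reduced w ->
    f (eval_word w) =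
    fold_right (fun x acc =>
      match x with inl a => fA a | inr b => fB b end + acc) 0 w.
End FreeProduct.

(* Fix b <> 1 in B and u, v in A.  The elements g = b v b^-1 u and h = v b u b^-1
   are cyclically reduced, so their powers have split value n (fA u + fA v) and
   fhat g = fhat h = fA u + fA v.  In the powers of gh, however, each period
   b v b^-1 u . v b u b^-1 collapses the adjacent letters u v into the single
   letter uv, so fhat (gh) = 2 fA (uv).  Hence
   |fhat (gh) - fhat g - fhat h| = 2 |fA (uv) - fA u - fA v|, which gives
   def fhat >= 2 def fA; by symmetry also def fhat >= 2 def fB. *)

From Stdlib Require Import Reals List Lra Lia Classical.
From Coquelicot Require Import Coquelicot.
Open Scope R_scope.
Import ListNotations.

Lemma ginv_gone (G : Group) : ginv (gone : G) = gone.
Proof. rewrite <- (gmulVx G gone) at 2; rewrite gmulx1; reflexivity. Qed.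

Lemma ginv_neq_gone (G : Group) (x : G) : x <> gone -> ginv x <> gone.
Proof.
  intros Hx E; apply Hx.
  rewrite <- (gmulxV G x), E, gmulx1; reflexivity.
Qed.

Lemma gmul_eq_gone_inv (G : Group) (x y : G) : gmul x y = gone -> y = ginv x.
Proof. intro E; rewrite <- (gmul1x G y), <- (gmulVx G x), <- gmulA, E, gmulx1; reflexivity. Qed.

Lemma hom_gone {G H : Group} (phi : G -> H) : is_hom phi -> phi gone = gone.
Proof.
  intro Hphi.
  assert (E : phi gone = gmul (phi gone) (phi gone)) by (rewrite <- Hphi, gmul1x; reflexivity).
  transitivity (gmul (ginv (phi gone)) (gmul (phi gone) (phi gone))).
  - rewrite gmulA, gmulVx, gmul1x; reflexivity.
  - rewrite <- E, gmulVx; reflexivity.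
Qed.

Lemma hom_mulA {G H : Group} (phi : G -> H) (x y : G) (z : H) : is_hom phi ->
  gmul (phi x) (gmul (phi y) z) = gmul (phi (gmul x y)) z.
Proof. intro Hphi; rewrite gmulA, <- Hphi; reflexivity. Qed.

Lemma alternating_gone {G : Group} (f : G -> R) : alternating f -> f gone = 0.
Proof. intro Halt; pose proof (Halt gone) as E; rewrite ginv_gone in E; lra. Qed.

Lemma alternating_defect_trivial {G : Group} (f : G -> R) (x y : G) :
  alternating f -> x = gone \/ y = gone \/ gmul x y = gone ->
  f (gmul x y) - f x - f y = 0.
Proof.
  intros Halt [-> | [-> | Exy]].
  - rewrite gmul1x, (alternating_gone f Halt); ring.
  - rewrite gmulx1, (alternating_gone f Halt); ring.
  - rewrite Exy, (gmul_eq_gone_inv G x y Exy), Halt, (alternating_gone f Halt); ring.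
Qed.

Lemma defect_real_le {G : Group} (f : G -> R) (M : R) : quasimorphism f ->
  (forall g h : G, Rabs (f (gmul g h) - f g - f h) <= M) -> real (defect f) <= M.
Proof.
  intros [C HC] HM; unfold defect.
  destruct (Lub_Rbar_correct (fun r => exists g h : G, r = Rabs (f (gmul g h) - f g - f h)))
    as [Hub Hlub].
  revert Hub Hlub; destruct (Lub_Rbar _) as [r| |]; intros Hub Hlub; simpl.
  - apply (Hlub (Finite M)); intros x [g [h ->]]; apply HM.
  - exfalso; apply (Hlub (Finite C)); intros x [g [h ->]]; apply HC.
  - exfalso; apply (Hub (Rabs (f (gmul gone gone) - f gone - f gone))); eauto.
Qed.

Lemma defect_ge {G : Group} (f : G -> R) (x : R) :
  (forall M, (forall g h : G, Rabs (f (gmul g h) - f g - f h) <= M) -> x <= M) ->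
  Rbar_le (Finite x) (defect f).
Proof.
  intro Hx; unfold defect.
  destruct (Lub_Rbar_correct (fun r => exists g h : G, r = Rabs (f (gmul g h) - f g - f h)))
    as [Hub _].
  revert Hub; destruct (Lub_Rbar _) as [M| |]; intro Hub; simpl; trivial.
  - apply Hx; intros g h; apply Hub; eauto.
  - apply (Hub (Rabs (f (gmul gone gone) - f gone - f gone))); eauto.
Qed.

Lemma homogenization_affine {G : Group} (f : G -> R) (g : G) (c d : R) :
  (forall n, f (gpow g (S n)) = INR (S n) * c + d) -> homogenization f g = c.
Proof.
  intro Hfg; unfold homogenization.
  assert (Hlim : is_lim_seq (fun n => f (gpow g n) / INR n) c).
  { apply is_lim_seq_incr_1.
    apply is_lim_seq_ext with (fun n => c + d * / INR (S n)).
    - intro n; rewrite Hfg; field; apply not_0_INR; lia.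
    - assert (Hinv : is_lim_seq (fun n => / INR (S n)) 0).
      { apply (is_lim_seq_incr_1 (fun n => / INR n)).
        exact (is_lim_seq_inv INR p_infty is_lim_seq_INR ltac:(discriminate)). }
      pose proof (is_lim_seq_plus' _ _ c (d * 0) (is_lim_seq_const c)
                    (is_lim_seq_mult' _ _ d 0 (is_lim_seq_const d) Hinv)) as Hsum.
      rewrite Rmult_0_r, Rplus_0_r in Hsum; exact Hsum. }
  rewrite (is_lim_seq_unique _ _ Hlim); reflexivity.
Qed.

Fixpoint word_pow {T : Type} (w : list T) (n : nat) : list T :=
  match n with O => nil | S m => w ++ word_pow w m end.

Lemma word_pow_Sr {T : Type} (w : list T) (n : nat) : word_pow w (S n) = word_pow w n ++ w.
Proof.
  induction n as [|n IH]; simpl.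
  - rewrite app_nil_r; reflexivity.
  - simpl in IH; rewrite <- app_assoc, <- IH; reflexivity.
Qed.

Definition split_sum {A B : Group} (fA : A -> R) (fB : B -> R) (w : list (A + B)) : R :=
  fold_right (fun x acc => match x with inl a => fA a | inr b => fB b end + acc) 0 w.

Lemma split_sum_app {A B : Group} (fA : A -> R) (fB : B -> R) (l1 l2 : list (A + B)) :
  split_sum fA fB (l1 ++ l2) = split_sum fA fB l1 + split_sum fA fB l2.
Proof.
  induction l1 as [|x l IH]; unfold split_sum in *; simpl; [ring | rewrite IH; ring].
Qed.

Lemma split_sum_pow {A B : Group} (fA : A -> R) (fB : B -> R) (w : list (A + B)) (n : nat) :
  split_sum fA fB (word_pow w n) = INR n * split_sum fA fB w.
Proof.
  induction n as [|n IH]; simpl word_pow; [simpl; ring|].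
  rewrite split_sum_app, IH, S_INR; ring.
Qed.

Section Words.
Variables (A B G : Group) (iA : A -> G) (iB : B -> G).

Lemma reduced_app_cons (l1 l2 : list (A + B)) (y : A + B) :
  reduced l1 -> reduced (y :: l2) -> (l1 <> nil -> other_factor (last l1 y) y) ->
  reduced (l1 ++ y :: l2).
Proof.
  induction l1 as [|x l1 IH]; intros R1 R2 Hlast; [exact R2|].
  destruct R1 as [Hx [Hxz R1]]; simpl; split; [exact Hx|split].
  - destruct l1 as [|z l1]; [apply Hlast; discriminate | exact Hxz].
  - destruct l1 as [|z l1]; [exact R2|].
    apply IH; auto; intros _; apply Hlast; discriminate.
Qed.

Lemma reduced_pow_app (x : A + B) (w s : list (A + B)) (n : nat) :
  reduced (x :: w) -> reduced (x :: s) -> other_factor (last (x :: w) x) x ->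
  reduced (word_pow (x :: w) n ++ x :: s).
Proof.
  intros Rw Rs Hcyc; induction n as [|n IH]; [exact Rs|].
  assert (Hhead : exists l, word_pow (x :: w) n ++ x :: s = x :: l)
    by (destruct n; eexists; reflexivity).
  destruct Hhead as [l Hl]; rewrite Hl in IH.
  change (reduced (((x :: w) ++ word_pow (x :: w) n) ++ x :: s)).
  rewrite <- app_assoc, Hl.
  apply reduced_app_cons; auto.
Qed.

Lemma reduced_pow (x : A + B) (w : list (A + B)) (n : nat) :
  reduced (x :: w) -> other_factor (last (x :: w) x) x -> reduced (word_pow (x :: w) n).
Proof.
  intros Rw Hcyc; destruct n as [|n]; [exact I|].
  rewrite word_pow_Sr; apply reduced_pow_app; assumption.
Qed.

Lemma eval_word_app (l1 l2 : list (A + B)) :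
  eval_word iA iB (l1 ++ l2) = gmul (eval_word iA iB l1) (eval_word iA iB l2).
Proof.
  induction l1 as [|x l IH]; simpl; [rewrite gmul1x; reflexivity|].
  unfold eval_word in *; simpl; rewrite IH, gmulA; reflexivity.
Qed.

Lemma gpow_eval_word (w : list (A + B)) (n : nat) :
  gpow (eval_word iA iB w) n = eval_word iA iB (word_pow w n).
Proof.
  induction n as [|n IH]; simpl; [reflexivity|].
  rewrite IH, eval_word_app; reflexivity.
Qed.

Variables (fA : A -> R) (fB : B -> R) (f : G -> R).
Hypothesis Hsplit : is_split_qm iA iB fA fB f.

Lemma homogenization_cyclically_reduced (x : A + B) (w : list (A + B)) :
  reduced (x :: w) -> other_factor (last (x :: w) x) x ->
  homogenization f (eval_word iA iB (x :: w)) = split_sum fA fB (x :: w).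
Proof.
  intros Rw Hcyc; apply homogenization_affine with (d := 0); intro n.
  rewrite gpow_eval_word, (Hsplit _ (reduced_pow x w (S n) Rw Hcyc)).
  change (split_sum fA fB (word_pow (x :: w) (S n)) = INR (S n) * split_sum fA fB (x :: w) + 0).
  rewrite split_sum_pow; ring.
Qed.

End Words.

Lemma split_qm_swap (A B G : Group) (iA : A -> G) (iB : B -> G)
  (fA : A -> R) (fB : B -> R) (f : G -> R) :
  is_split_qm iA iB fA fB f -> is_split_qm iB iA fB fA f.
Proof.
  set (swap := fun x : B + A => match x with inl b => inr b | inr a => inl a end).
  intros Hsplit w Rw.
  assert (Rsw : reduced (map swap w)).
  { induction w as [|x w IH]; simpl in *; auto.
    destruct Rw as [Hx [Hxy Rw]]; split; [destruct x; exact Hx|split; auto].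
    destruct w as [|y w]; simpl; auto; destruct x, y; simpl in *; auto. }
  assert (Eeval : eval_word iA iB (map swap w) = eval_word iB iA w).
  { clear; induction w as [|x w IH]; simpl; auto.
    unfold eval_word in *; simpl; rewrite IH; destruct x; reflexivity. }
  rewrite <- Eeval, (Hsplit _ Rsw); clear.
  induction w as [|x w IH]; simpl; auto; rewrite IH; destruct x; reflexivity.
Qed.

Section DefectBound.
Variables (A B G : Group) (iA : A -> G) (iB : B -> G)
  (fA : A -> R) (fB : B -> R) (f : G -> R).
Hypotheses (HA : is_hom iA) (HB : is_hom iB) (altA : alternating fA) (altB : alternating fB).
Hypothesis Hsplit : is_split_qm iA iB fA fB f.

Let eval := eval_word iA iB.
Let fhat := homogenization f.

Section Witnesses.
Variables (b : B) (u v : A).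
Hypotheses (Hb : b <> gone) (Hu : u <> gone) (Hv : v <> gone) (Huv : gmul u v <> gone).

Let b' := ginv b.
Let g := eval [inr b; inl v; inr b'; inl u].
Let h := eval [inl v; inr b; inl u; inr b'].

Let Hb' : b' <> gone := ginv_neq_gone B b Hb.
Let fB_b' : fB b' = - fB b := altB b.

Lemma homogenization_witness_left : fhat g = fA u + fA v.
Proof.
  unfold fhat, g, eval; rewrite (homogenization_cyclically_reduced _ _ _ _ _ fA fB f Hsplit);
    simpl; try tauto.
  rewrite fB_b'; ring.
Qed.

Lemma homogenization_witness_right : fhat h = fA u + fA v.
Proof.
  unfold fhat, h, eval; rewrite (homogenization_cyclically_reduced _ _ _ _ _ fA fB f Hsplit);
    simpl; try tauto.
  rewrite fB_b'; ring.
Qed.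

Lemma gpow_witness_product (k : nat) :
  gpow (gmul g h) (S k) =
  eval (inr b :: inl v :: inr b' ::
        word_pow [inl (gmul u v); inr b; inl (gmul u v); inr b'] k ++
        [inl (gmul u v); inr b; inl u; inr b']).
Proof.
  induction k as [|k IH].
  - change (gmul (gmul g h) gone = eval [inr b; inl v; inr b'; inl (gmul u v);
                                         inr b; inl u; inr b']).
    rewrite gmulx1; unfold g, h, eval; rewrite <- eval_word_app; simpl.
    rewrite !(hom_mulA iA u v) by exact HA; reflexivity.
  - change (gmul (gmul g h) (gpow (gmul g h) (S k)) = eval (inr b :: inl v :: inr b' ::
      word_pow [inl (gmul u v); inr b; inl (gmul u v); inr b'] (S k) ++
      [inl (gmul u v); inr b; inl u; inr b'])).
    rewrite IH; unfold g, h, eval, b'; rewrite <- !eval_word_app; simpl.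
    rewrite (hom_mulA iB (ginv b) b), gmulVx, (hom_gone iB HB), gmul1x by exact HB.
    rewrite !(hom_mulA iA u v) by exact HA; reflexivity.
Qed.

(* The product word is reduced because the merged letter uv is non-trivial. *)
Lemma homogenization_witness_product : fhat (gmul g h) = 2 * fA (gmul u v).
Proof.
  set (w := gmul u v) in *.
  apply homogenization_affine with (d := fA u + fA v - fA w); intro k.
  assert (Rk : reduced (inr b :: inl v :: inr b' ::
      word_pow [inl w; inr b; inl w; inr b'] k ++ [inl w; inr b; inl u; inr b'])).
  { assert (Rtail := reduced_pow_app A B (inl w) [inr b; inl w; inr b']
                       [inr b; inl u; inr b'] k).
    destruct k as [|k]; simpl in *; tauto. }
  rewrite gpow_witness_product; fold w; unfold eval; rewrite (Hsplit _ Rk).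
  change (split_sum fA fB (inr b :: inl v :: inr b' ::
      word_pow [inl w; inr b; inl w; inr b'] k ++ [inl w; inr b; inl u; inr b'])
    = INR (S k) * (2 * fA w) + (fA u + fA v - fA w)).
  rewrite S_INR; simpl split_sum; rewrite split_sum_app, split_sum_pow.
  simpl split_sum; rewrite fB_b'; ring.
Qed.

End Witnesses.

Lemma split_qm_defect_le_half (M : R) :
  (exists b : B, b <> gone) ->
  (forall x y : G, Rabs (fhat (gmul x y) - fhat x - fhat y) <= M) ->
  forall u v : A, Rabs (fA (gmul u v) - fA u - fA v) <= M / 2.
Proof.
  intros [b Hb] HM u v.
  assert (M_ge0 : 0 <= M) by exact (Rle_trans _ _ _ (Rabs_pos _) (HM gone gone)).
  destruct (classic (u = gone \/ v = gone \/ gmul u v = gone)) as [Htriv | Hnontriv].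
  - rewrite (alternating_defect_trivial fA u v altA Htriv), Rabs_R0; lra.
  - assert (Hu : u <> gone) by tauto.
    assert (Hv : v <> gone) by tauto.
    assert (Huv : gmul u v <> gone) by tauto.
    pose proof (HM (eval [inr b; inl v; inr (ginv b); inl u])
                   (eval [inl v; inr b; inl u; inr (ginv b)])) as Hgh.
    rewrite (homogenization_witness_product b u v Hb Hu Hv Huv),
      (homogenization_witness_left b u v Hb Hu Hv),
      (homogenization_witness_right b u v Hb Hu Hv) in Hgh.
    replace (2 * fA (gmul u v) - (fA u + fA v) - (fA u + fA v))
      with (2 * (fA (gmul u v) - fA u - fA v)) in Hgh by ring.
    rewrite Rabs_mult, (Rabs_right 2) in Hgh by lra; lra.
Qed.

End DefectBound.

Theorem lemma3p2 (A B G : Group) (iA : A -> G) (iB : B -> G)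
  (fA : A -> R) (fB : B -> R) (f : G -> R) :
  is_free_product iA iB ->
  (exists a : A, a <> gone) -> (exists b : B, b <> gone) ->
  quasimorphism fA -> alternating fA ->
  quasimorphism fB -> alternating fB ->
  is_split_qm iA iB fA fB f ->
  Rbar_le (Finite (2 * Rmax (real (defect fA)) (real (defect fB))))
          (defect (homogenization f)).
Proof.
  intros [HA [HB _]] HAnontriv HBnontriv qA altA qB altB Hsplit.
  apply defect_ge; intros M HM.
  assert (dA : real (defect fA) <= M / 2).
  { apply defect_real_le; [exact qA|].
    exact (split_qm_defect_le_half A B G iA iB fA fB f HA HB altA altB Hsplit M HBnontriv HM). }
  assert (dB : real (defect fB) <= M / 2).
  { apply defect_real_le; [exact qB|].
    exact (split_qm_defect_le_half B A G iB iA fB fA f HB HA altB altA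
             (split_qm_swap A B G iA iB fA fB f Hsplit) M HAnontriv HM). }
  unfold Rmax; destruct (Rle_dec _ _); lra.
Qed.
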